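(* Let $\lambda>0$, $\mathbf a>0$. For $y\in\mathbb R$ define $\mathscr H_\lambda(y)=\int_0^{\mathbf a}\big(u-\lambda\ln G(u,1-y)\big)G(u,1-y)\,du$. Then $\mathscr H_\lambda$ is increasing on $(-\infty,0]$ and decreasing on $[0,\infty)$, so that $\max_{y\in\mathbb R}\mathscr H_\lambda(y)=\mathscr H_\lambda(0)=f_\lambda(0)=\lambda\ln\big(\lambda(e^{\mathbf a/\lambda}-1)\big)$. In particular this maximum is positive if $\mathbf a>\lambda\ln(1+1/\lambda)$, zero if $\mathbf a=\lambda\ln(1+1/\lambda)$ and negative if $\mathbf a<\lambda\ln(1+1/\lambda)$.
   Context: Gibbs density: for $u\in[0,\mathbf a]$, $s\in\mathbb R$, $G(u,s)=\frac{s\,e^{us/\lambda}}{\lambda(e^{\mathbf a s/\lambda}-1)}$ if $s\neq0$ and $G(u,0)=1/\mathbf a$. $f_\lambda(y)=\lambda\ln\frac{\lambda(e^{\mathbf a(1-y)/\lambda}-1)}{1-y}$ for $y\neq 1$, $f_\lambda(1)=\lambda\ln\mathbf a$. *)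

From Stdlib Require Import Reals.
From Coquelicot Require Import Coquelicot.
Open Scope R_scope.

Definition Gibbs (a lam u s : R) : R :=
  if Req_EM_T s 0 then / a
  else s * exp (u * s / lam) / (lam * (exp (a * s / lam) - 1)).

Definition f_lam (a lam y : R) : R :=
  if Req_EM_T y 1 then lam * ln a
  else lam * ln (lam * (exp (a * (1 - y) / lam) - 1) / (1 - y)).

Definition H_lam (a lam y : R) : R :=
  RInt (fun u => (u - lam * ln (Gibbs a lam u (1 - y))) * Gibbs a lam u (1 - y)) 0 a.

(* Write G_s for the density u |-> G(u,s) on [0,a]: G_s(u) = Z(s) e^{us/lam} with
   Z(s) = G(0,s), and let M(s) be its mean.  Since ln G_s(u) = ln Z(s) + us/lam,
   H(y) = y M(1-y) - lam ln Z(1-y).  The relative entropy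
   D(p||q) = ln Z(p) - ln Z(q) + (p-q)/lam M(p) of G_p w.r.t. G_q is positive for
   p <> q (Gibbs' inequality); adding D(p||q) and D(q||p) shows that M is
   increasing.  Moreover H(y) = -lam D(1-y||1) + const, and
   lam (D(p2||1) - D(p1||1)) = lam D(p2||p1) + (p1-1)(M p2 - M p1),
   where both terms are positive when p1 lies between 1 and p2: this gives the
   monotonicity of H on both sides of 0.  The value H(0) = lam ln(lam(e^{a/lam}-1))
   is increasing in a and vanishes at a = lam ln(1 + 1/lam). *)

From Stdlib Require Import Reals Lra.
From Coquelicot Require Import Coquelicot.
Open Scope R_scope.

Lemma RInt_gt_0_off_point (h : R -> R) (a b x0 : R) : a < b ->
  (forall x, continuous h x) -> (forall x, 0 <= h x) ->
  (forall x, x <> x0 -> 0 < h x) -> 0 < RInt h a b.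
Proof.
  intros Hab Hc Hnn Hpos.
  assert (Hex : forall u v, ex_RInt h u v)
    by (intros; apply (@ex_RInt_continuous R_CompleteNormedModule); intros; apply Hc).
  set (m := (a + b) / 2).
  rewrite <- (@RInt_Chasles R_CompleteNormedModule h a m b) by apply Hex.
  change (0 < RInt h a m + RInt h m b).
  assert (Hge : forall u v, u <= v -> 0 <= RInt h u v)
    by (intros; apply RInt_ge_0; [assumption | apply Hex | intros; apply Hnn]).
  assert (Hgt : forall u v, u < v -> ~ (u < x0 < v) -> 0 < RInt h u v).
  { intros u v Huv Hx0. apply RInt_gt_0; [assumption | | intros; apply Hc].
    intros x Hx. apply Hpos. intros ->. tauto. }
  destruct (Rle_lt_dec x0 m).
  - pose proof (Hge a m ltac:(unfold m; lra)).
    pose proof (Hgt m b ltac:(unfold m; lra) ltac:(lra)). lra.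
  - pose proof (Hgt a m ltac:(unfold m; lra) ltac:(lra)).
    pose proof (Hge m b ltac:(unfold m; lra)). lra.
Qed.

(* The normalising constant Z(s) = 1 / int_0^a e^{us/lam} du. *)
Definition Gibbs_norm (a lam s : R) : R := Gibbs a lam 0 s.

Definition Gibbs_mean (a lam s : R) : R := RInt (fun u => u * Gibbs a lam u s) 0 a.

Definition Gibbs_entropy (a lam p q : R) : R :=
  ln (Gibbs_norm a lam p) - ln (Gibbs_norm a lam q) + (p - q) / lam * Gibbs_mean a lam p.

Definition Gibbs_log_ratio (a lam p q u : R) : R :=
  ln (Gibbs_norm a lam q) - ln (Gibbs_norm a lam p) + (q - p) / lam * u.

Lemma Gibbs_exp (a lam u s : R) :
  Gibbs a lam u s = Gibbs_norm a lam s * exp (u * s / lam).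
Proof.
  unfold Gibbs_norm, Gibbs. destruct (Req_EM_T s 0) as [-> | Hs].
  - replace (u * 0 / lam) with 0 by (unfold Rdiv; ring). rewrite exp_0; ring.
  - replace (0 * s / lam) with 0 by (unfold Rdiv; ring). rewrite exp_0.
    unfold Rdiv; ring.
Qed.

Lemma Gibbs_continuous (a lam s u : R) : continuous (fun u => Gibbs a lam u s) u.
Proof.
  apply (continuous_ext (fun u => Gibbs_norm a lam s * exp (u * s / lam)));
    [intros; symmetry; apply Gibbs_exp |].
  apply (@ex_derive_continuous R_AbsRing R_NormedModule). auto_derive. trivial.
Qed.

Lemma ex_RInt_Gibbs_moment (a lam s : R) : ex_RInt (fun u => u * Gibbs a lam u s) 0 a.
Proof.
  apply (@ex_RInt_continuous R_CompleteNormedModule). intros x _.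
  apply (@continuous_mult R_UniformSpace R_AbsRing); [apply continuous_id | apply Gibbs_continuous].
Qed.

Section GibbsDensity.

Variables a lam : R.
Hypothesis Hlam : 0 < lam.
Hypothesis Ha : 0 < a.

Lemma exp_scaled_neq_1 (s : R) : s <> 0 -> exp (a * s / lam) - 1 <> 0.
Proof.
  intros Hs HE. assert (Hexp : exp (a * s / lam) = exp 0) by (rewrite exp_0; lra).
  apply exp_inv in Hexp. unfold Rdiv in Hexp.
  apply Rmult_integral in Hexp as [Has | Hinv].
  - apply Rmult_integral in Has as [H0 | H0]; lra.
  - apply (Rinv_neq_0_compat lam); lra.
Qed.

Lemma Gibbs_norm_pos (s : R) : 0 < Gibbs_norm a lam s.
Proof.
  unfold Gibbs_norm, Gibbs. destruct (Req_EM_T s 0) as [-> | Hs].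
  - apply Rinv_0_lt_compat; lra.
  - replace (0 * s / lam) with 0 by (unfold Rdiv; ring). rewrite exp_0, Rmult_1_r.
    destruct (Rlt_or_le 0 s) as [Hpos | Hneg].
    + assert (1 < exp (a * s / lam)).
      { rewrite <- exp_0. apply exp_increasing.
        apply Rdiv_lt_0_compat; [apply Rmult_lt_0_compat |]; lra. }
      apply Rdiv_lt_0_compat; [lra | apply Rmult_lt_0_compat; lra].
    + assert (exp (a * s / lam) < 1).
      { rewrite <- exp_0. apply exp_increasing. unfold Rdiv.
        apply Rmult_neg_pos; [nra | apply Rinv_0_lt_compat; lra]. }
      unfold Rdiv. apply Rmult_neg_neg; [lra |].
      apply Rinv_lt_0_compat. nra.
Qed.

Lemma Gibbs_pos (u s : R) : 0 < Gibbs a lam u s.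
Proof.
  rewrite Gibbs_exp. apply Rmult_lt_0_compat; [apply Gibbs_norm_pos | apply exp_pos].
Qed.

Lemma ln_Gibbs (u s : R) :
  ln (Gibbs a lam u s) = ln (Gibbs_norm a lam s) + u * s / lam.
Proof.
  rewrite Gibbs_exp, ln_mult by (apply Gibbs_norm_pos || apply exp_pos).
  rewrite ln_exp. reflexivity.
Qed.

Lemma is_RInt_Gibbs (s : R) : is_RInt (fun u => Gibbs a lam u s) 0 a 1.
Proof.
  destruct (Req_EM_T s 0) as [-> | Hs].
  - apply is_RInt_ext with (f := fun _ => / a).
    + intros x _. unfold Gibbs. destruct (Req_EM_T 0 0); [reflexivity | lra].
    + replace 1 with (scal (a - 0) (/ a)); [apply (@is_RInt_const R_NormedModule) |].
      change ((a - 0) * / a = 1). field. lra.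
  - pose proof (exp_scaled_neq_1 s Hs) as HE.
    set (F := fun u => Gibbs_norm a lam s * lam / s * exp (u * s / lam)).
    replace 1 with (minus (F a) (F 0)).
    + apply (@is_RInt_derive R_CompleteNormedModule F).
      * intros x _. unfold F. auto_derive; [trivial |].
        rewrite Gibbs_exp. unfold Rdiv. field. lra.
      * intros x _. apply Gibbs_continuous.
    + unfold F, minus, plus, opp; simpl. unfold Gibbs_norm, Gibbs.
      destruct (Req_EM_T s 0); [contradiction |].
      replace (0 * s / lam) with 0 by (unfold Rdiv; ring). rewrite exp_0.
      field. repeat split; lra.
Qed.

Lemma H_lam_eq (y : R) :
  H_lam a lam y = y * Gibbs_mean a lam (1 - y) - lam * ln (Gibbs_norm a lam (1 - y)).
Proof.
  unfold H_lam. set (s := 1 - y).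
  transitivity (minus (scal y (Gibbs_mean a lam s)) (scal (lam * ln (Gibbs_norm a lam s)) 1)).
  2: { unfold minus, plus, opp, scal; simpl. unfold mult; simpl. ring. }
  apply (@is_RInt_unique R_CompleteNormedModule).
  eapply is_RInt_ext.
  2: { apply (@is_RInt_minus R_NormedModule); apply (@is_RInt_scal R_NormedModule).
       - apply (@RInt_correct R_CompleteNormedModule), ex_RInt_Gibbs_moment.
       - apply (is_RInt_Gibbs s). }
  intros x _. rewrite ln_Gibbs.
  unfold minus, plus, opp, scal; simpl. unfold mult; simpl.
  unfold s. field. lra.
Qed.

Lemma Gibbs_log_ratio_exp (p q u : R) :
  Gibbs a lam u p * exp (Gibbs_log_ratio a lam p q u) = Gibbs a lam u q.
Proof.
  replace (Gibbs_log_ratio a lam p q u) with (ln (Gibbs a lam u q) - ln (Gibbs a lam u p))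
    by (rewrite !ln_Gibbs; unfold Gibbs_log_ratio; field; lra).
  unfold Rminus. rewrite exp_plus, exp_Ropp, !exp_ln by apply Gibbs_pos.
  pose proof (Gibbs_pos u p). field. lra.
Qed.

(* Gibbs' inequality in integral form: since G_p e^r = G_q integrates to 1,
   the integral of G_p (e^r - 1 - r) is - int G_p r = D(p||q). *)
Lemma is_RInt_Gibbs_entropy (p q : R) :
  is_RInt (fun u => let r := Gibbs_log_ratio a lam p q u in Gibbs a lam u p * (exp r - 1 - r))
    0 a (Gibbs_entropy a lam p q).
Proof.
  set (c := ln (Gibbs_norm a lam q) - ln (Gibbs_norm a lam p)).
  set (d := (q - p) / lam).
  replace (Gibbs_entropy a lam p q)
    with (minus (minus (minus 1 1) (scal c 1)) (scal d (Gibbs_mean a lam p))).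
  2: { unfold Gibbs_entropy, minus, plus, opp, scal; simpl. unfold mult; simpl.
       unfold c, d. field. lra. }
  eapply is_RInt_ext.
  2: { apply (@is_RInt_minus R_NormedModule);
       [apply (@is_RInt_minus R_NormedModule);
        [apply (@is_RInt_minus R_NormedModule); [apply (is_RInt_Gibbs q) | apply (is_RInt_Gibbs p)]
        | apply (@is_RInt_scal R_NormedModule), (is_RInt_Gibbs p)]
       | apply (@is_RInt_scal R_NormedModule);
         apply (@RInt_correct R_CompleteNormedModule), ex_RInt_Gibbs_moment]. }
  intros x _. simpl. rewrite <- (Gibbs_log_ratio_exp p q x).
  unfold Gibbs_log_ratio, minus, plus, opp, scal; simpl. unfold mult; simpl. fold c d. ring.
Qed.

Lemma Gibbs_entropy_pos (p q : R) : p <> q -> 0 < Gibbs_entropy a lam p q.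
Proof.
  intros Hpq.
  rewrite <- (is_RInt_unique _ _ _ _ (is_RInt_Gibbs_entropy p q)).
  set (u0 := (ln (Gibbs_norm a lam p) - ln (Gibbs_norm a lam q)) * lam / (q - p)).
  assert (Hroot : forall u, u <> u0 -> Gibbs_log_ratio a lam p q u <> 0).
  { intros u Hu Hr. apply Hu. unfold Gibbs_log_ratio in Hr. unfold u0.
    replace (ln (Gibbs_norm a lam p) - ln (Gibbs_norm a lam q)) with ((q - p) / lam * u)
      by lra.
    field. lra. }
  apply (RInt_gt_0_off_point _ 0 a u0); [lra | | |]; simpl.
  - intros x.
    apply (continuous_ext (fun u => let r := Gibbs_log_ratio a lam p q u in
                                    Gibbs_norm a lam p * exp (u * p / lam) * (exp r - 1 - r)));
      [intros; simpl; rewrite Gibbs_exp; reflexivity |].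
    apply (@ex_derive_continuous R_AbsRing R_NormedModule).
    unfold Gibbs_log_ratio. auto_derive. trivial.
  - intros x. apply Rmult_le_pos; [left; apply Gibbs_pos |].
    destruct (Req_dec (Gibbs_log_ratio a lam p q x) 0) as [H0 | H0].
    + rewrite H0, exp_0. lra.
    + pose proof (exp_ineq1 _ H0). lra.
  - intros x Hx. apply Rmult_lt_0_compat; [apply Gibbs_pos |].
    pose proof (exp_ineq1 _ (Hroot x Hx)). lra.
Qed.

Lemma Gibbs_mean_increasing (p q : R) :
  p < q -> Gibbs_mean a lam p < Gibbs_mean a lam q.
Proof.
  intros Hpq.
  pose proof (Gibbs_entropy_pos p q ltac:(lra)).
  pose proof (Gibbs_entropy_pos q p ltac:(lra)).
  assert (Hsym : Gibbs_entropy a lam p q + Gibbs_entropy a lam q p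
                 = (q - p) / lam * (Gibbs_mean a lam q - Gibbs_mean a lam p))
    by (unfold Gibbs_entropy; field; lra).
  assert (0 < (q - p) / lam) by (apply Rdiv_lt_0_compat; lra).
  nra.
Qed.

Lemma H_lam_entropy (y : R) :
  H_lam a lam y = - lam * Gibbs_entropy a lam (1 - y) 1 - lam * ln (Gibbs_norm a lam 1).
Proof. rewrite H_lam_eq. unfold Gibbs_entropy. field. lra. Qed.

Lemma Gibbs_entropy_chain (p1 p2 : R) :
  lam * (Gibbs_entropy a lam p2 1 - Gibbs_entropy a lam p1 1) =
  lam * Gibbs_entropy a lam p2 p1 + (p1 - 1) * (Gibbs_mean a lam p2 - Gibbs_mean a lam p1).
Proof. unfold Gibbs_entropy. field. lra. Qed.

Lemma H_lam_lt (x y : R) : x <> y -> y * (y - x) <= 0 -> H_lam a lam x < H_lam a lam y.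
Proof.
  intros Hxy Hbetween. rewrite !H_lam_entropy.
  pose proof (Gibbs_entropy_chain (1 - y) (1 - x)) as Hchain.
  assert (0 < lam * Gibbs_entropy a lam (1 - x) (1 - y))
    by (apply Rmult_lt_0_compat, Gibbs_entropy_pos; lra).
  assert (0 <= (1 - y - 1) * (Gibbs_mean a lam (1 - x) - Gibbs_mean a lam (1 - y))).
  { destruct (Rlt_or_le x y) as [Hlt | Hle].
    - pose proof (Gibbs_mean_increasing (1 - y) (1 - x) ltac:(lra)). nra.
    - pose proof (Gibbs_mean_increasing (1 - x) (1 - y) ltac:(lra)). nra. }
  lra.
Qed.

Lemma H_lam_le_H_lam_0 (y : R) : H_lam a lam y <= H_lam a lam 0.
Proof.
  destruct (Req_dec y 0) as [-> | Hy]; [lra |].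
  left. apply H_lam_lt; [assumption | lra].
Qed.

Lemma H_lam_0 : H_lam a lam 0 = lam * ln (lam * (exp (a / lam) - 1)).
Proof.
  assert (1 < exp (a / lam))
    by (rewrite <- exp_0; apply exp_increasing, Rdiv_lt_0_compat; lra).
  assert (Hnorm : Gibbs_norm a lam 1 = / (lam * (exp (a / lam) - 1))).
  { unfold Gibbs_norm, Gibbs. destruct (Req_EM_T 1 0); [lra |].
    replace (0 * 1 / lam) with 0 by (unfold Rdiv; ring).
    replace (a * 1 / lam) with (a / lam) by (unfold Rdiv; ring).
    rewrite exp_0. field. lra. }
  rewrite H_lam_eq. replace (1 - 0) with 1 by ring.
  rewrite Hnorm, ln_Rinv by (apply Rmult_lt_0_compat; lra). ring.
Qed.

End GibbsDensity.

Lemma f_lam_0 (a lam : R) : f_lam a lam 0 = lam * ln (lam * (exp (a / lam) - 1)).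
Proof.
  unfold f_lam. destruct (Req_EM_T 0 1); [lra |].
  replace (a * (1 - 0) / lam) with (a / lam) by (unfold Rdiv; ring).
  replace (1 - 0) with 1 by ring. unfold Rdiv. rewrite Rinv_1, Rmult_1_r. reflexivity.
Qed.

Lemma scaled_log_exp_increasing (lam a b : R) : 0 < lam -> 0 < a -> a < b ->
  lam * ln (lam * (exp (a / lam) - 1)) < lam * ln (lam * (exp (b / lam) - 1)).
Proof.
  intros Hlam Ha Hab.
  assert (1 < exp (a / lam))
    by (rewrite <- exp_0; apply exp_increasing, Rdiv_lt_0_compat; lra).
  assert (exp (a / lam) < exp (b / lam))
    by (apply exp_increasing; unfold Rdiv; apply Rmult_lt_compat_r;
        [apply Rinv_0_lt_compat |]; lra).
  apply Rmult_lt_compat_l; [assumption |].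
  apply ln_increasing; [apply Rmult_lt_0_compat | apply Rmult_lt_compat_l]; lra.
Qed.

Lemma scaled_log_exp_at_threshold (lam : R) : 0 < lam ->
  lam * ln (lam * (exp (lam * ln (1 + / lam) / lam) - 1)) = 0.
Proof.
  intros Hlam.
  assert (0 < / lam) by (apply Rinv_0_lt_compat; lra).
  replace (lam * ln (1 + / lam) / lam) with (ln (1 + / lam)) by (field; lra).
  rewrite exp_ln by lra.
  replace (lam * (1 + / lam - 1)) with 1 by (field; lra).
  rewrite ln_1. ring.
Qed.

Lemma threshold_pos (lam : R) : 0 < lam -> 0 < lam * ln (1 + / lam).
Proof.
  intros Hlam. assert (0 < / lam) by (apply Rinv_0_lt_compat; lra).
  apply Rmult_lt_0_compat; [assumption |].
  rewrite <- ln_1. apply ln_increasing; lra.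
Qed.

Theorem mainTheorem5 (lam a : R) (Hlam : 0 < lam) (Ha : 0 < a) :
  (forall x y, x < y -> y <= 0 -> H_lam a lam x < H_lam a lam y) /\
  (forall x y, 0 <= x -> x < y -> H_lam a lam y < H_lam a lam x) /\
  (forall y, H_lam a lam y <= H_lam a lam 0) /\
  H_lam a lam 0 = f_lam a lam 0 /\
  f_lam a lam 0 = lam * ln (lam * (exp (a / lam) - 1)) /\
  (a > lam * ln (1 + / lam) -> H_lam a lam 0 > 0) /\
  (a = lam * ln (1 + / lam) -> H_lam a lam 0 = 0) /\
  (a < lam * ln (1 + / lam) -> H_lam a lam 0 < 0).
Proof.
  pose proof (threshold_pos lam Hlam) as Ha0.
  pose proof (scaled_log_exp_at_threshold lam Hlam) as Hzero.
  rewrite (H_lam_0 a lam Hlam Ha), f_lam_0.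
  split; [| split; [| split; [| split; [| split; [| split; [| split]]]]]].
  - intros x y Hxy Hy. apply H_lam_lt; nra.
  - intros x y Hx Hxy. apply H_lam_lt; nra.
  - intros y. rewrite <- (H_lam_0 a lam Hlam Ha). apply H_lam_le_H_lam_0; assumption.
  - reflexivity.
  - reflexivity.
  - intros Hgt. rewrite <- Hzero. apply scaled_log_exp_increasing; assumption.
  - intros ->. exact Hzero.
  - intros Hlt. rewrite <- Hzero. apply scaled_log_exp_increasing; assumption.
Qed.
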